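(* Let $n\ge 3$. There exists an anti-$\mathrm{SL}_2$-tiling of $\mathbb{Z}^n$, and it is unique up to translation: every anti-$\mathrm{SL}_2$-tiling $(b_{\mathbf{i}})$ of $\mathbb{Z}^n$ satisfies $b_{\mathbf{i}}=a_{\mathbf{i}+\mathbf{t}}$ for all $\mathbf{i}$ for some fixed $\mathbf{t}\in\mathbb{Z}^n$, where $a_{\mathbf{i}}=f(i_1+\dots+i_n)$ with $f(r)=F_{2r-1}$ for $r\ge1$ and $f(r)=F_{1-2r}$ for $r\le 0$. In particular, every two-dimensional slice of an anti-$\mathrm{SL}_2$-tiling of $\mathbb{Z}^n$ (obtained by fixing all but two coordinates of $\mathbf{i}$) is a translate of the staircase anti-$\mathrm{SL}_2$-tiling of $\mathbb{Z}^2$ given by $(i,j)\mapsto f(i+j)$, and all entries are odd-indexed Fibonacci numbers.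
   Context: Write $\mathbf{i}=(i_1,\dots,i_n)\in\mathbb{Z}^n$ and $\mathbf{e}_k$ for the $k$-th standard unit vector. An anti-$\mathrm{SL}_2$-tiling of $\mathbb{Z}^n$ is an array $(a_{\mathbf{i}})_{\mathbf{i}\in\mathbb{Z}^n}$ with all $a_{\mathbf{i}}\in\mathbb{Z}_{>0}$ such that for all $\mathbf{i}\in\mathbb{Z}^n$ and all $k\ne\ell$: $a_{\mathbf{i}+\mathbf{e}_\ell}a_{\mathbf{i}+\mathbf{e}_k}-a_{\mathbf{i}}a_{\mathbf{i}+\mathbf{e}_k+\mathbf{e}_\ell}=-1$. Fibonacci numbers are indexed $F_1=1,F_2=1,F_3=2,F_4=3,F_5=5,\dots$ with $F_{m+2}=F_{m+1}+F_m$. *)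

From HB Require Import structures.
From mathcomp Require Import all_boot all_order all_algebra.
Set Implicit Arguments. Unset Strict Implicit. Unset Printing Implicit Defensive.
Import Order.TTheory GRing.Theory Num.Theory.
Local Open Scope ring_scope.

(* Fibonacci numbers: fib 0 = 0, fib 1 = F_1 = 1, fib 2 = F_2 = 1, ... *)
Fixpoint fib (m : nat) : nat :=
  match m with
  | 0 => 0
  | 1 => 1
  | (k.+1 as m').+1 => fib m' + fib k
  end.

Definition unitv (n : nat) (k : 'I_n) : 'rV[int]_n := delta_mx 0 k.

Definition anti_SL2_tiling (n : nat) (a : 'rV[int]_n -> int) : Prop :=
  (forall i, 0 < a i) /\
  (forall (i : 'rV[int]_n) (k l : 'I_n), k != l ->
     a (i + unitv l) * a (i + unitv k) - a i * a (i + unitv k + unitv l) = -1).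

Definition fstair (r : int) : int :=
  if 1 <= r then (fib (absz (2 * r - 1)%R))%:Z else (fib (absz (1 - 2 * r)%R))%:Z.

Definition stair_tiling (n : nat) (i : 'rV[int]_n) : int :=
  fstair (\sum_(k < n) i 0 k).

From HB Require Import structures.
From mathcomp Require Import all_boot all_order all_algebra.
From mathcomp Require Import zify ring.
Set Implicit Arguments. Unset Strict Implicit. Unset Printing Implicit Defensive.
Import Order.TTheory GRing.Theory Num.Theory.
Local Open Scope ring_scope.

(* For three distinct directions k, l, m, the tiling relations on the faces of the
   unit cube at i force b (i + e_k) = b (i + e_l).  Hence for n >= 3 a tiling depends
   only on the coordinate sum, through a positive sequence h with
   h s * h (s + 2) = h (s + 1)^2 + 1.  Descending from a local minimum, such a sequence
   takes the value 1 at two consecutive places, and the relation then determines it;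
   f is the solution with f 0 = f 1 = 1, by Cassini's identity for odd-indexed
   Fibonacci numbers. *)

Lemma fib_gt0 m : (0 < m)%N -> (0 < fib m)%N.
Proof.
case: m => // m _; elim: m => [//|m IHm].
have -> : fib m.+2 = (fib m.+1 + fib m)%N by [].
lia.
Qed.

Definition oddfib (m : nat) : int := (fib (2 * m).+1)%:Z.

Lemma oddfibSS m : oddfib m.+2 = 3 * oddfib m.+1 - oddfib m.
Proof.
rewrite /oddfib.
have -> : (2 * m.+2).+1 = (2 * m).+4.+1 by lia.
have -> : (2 * m.+1).+1 = (2 * m).+3 by lia.
set k := (2 * m)%N.
have -> : fib k.+4.+1 = (fib k.+4 + fib k.+3)%N by [].
have -> : fib k.+4 = (fib k.+3 + fib k.+2)%N by [].
have -> : fib k.+3 = (fib k.+2 + fib k.+1)%N by [].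
lia.
Qed.

Lemma oddfib_cassini m : oddfib m * oddfib m.+2 = oddfib m.+1 ^+ 2 + 1.
Proof.
elim: m => [//|m IHm].
rewrite oddfibSS (oddfibSS m); move: IHm; rewrite oddfibSS; nia.
Qed.

Lemma fstair_pos (k : nat) : fstair k.+1 = oddfib k.
Proof. by rewrite /fstair lez_nat /=; congr (Posz (fib _)); lia. Qed.

Lemma fstair_npos (k : nat) : fstair (- k%:Z) = oddfib k.
Proof. by rewrite /fstair ifF; [congr (Posz (fib _)) | apply/negbTE]; lia. Qed.

Lemma fstair_gt0 r : 0 < fstair r.
Proof. by rewrite /fstair; case: ifP => _; rewrite ltz_nat fib_gt0 //; lia. Qed.

Lemma fstair_oddfib r : exists m, fstair r = oddfib m.
Proof.
have [r_gt0|r_le0] := ltrP 0 r.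
  by exists `|r - 1|%N; rewrite -fstair_pos; congr fstair; lia.
by exists `|r|%N; rewrite -fstair_npos; congr fstair; lia.
Qed.

Lemma fstair_cassini r : fstair r * fstair (r + 2) = fstair (r + 1) ^+ 2 + 1.
Proof.
case: r => [[|k]|[|k]] //.
  have -> : k.+1%:Z + 2 = k.+3 by lia.
  have -> : k.+1%:Z + 1 = k.+2 by lia.
  by rewrite !fstair_pos oddfib_cassini.
have -> : Negz k.+1 = - k.+2%:Z by [].
have -> : - k.+2%:Z + 2 = - k%:Z by lia.
have -> : - k.+2%:Z + 1 = - k.+1%:Z by lia.
by rewrite !fstair_npos mulrC oddfib_cassini.
Qed.

Lemma int_ind_around (P : int -> Prop) a :
  P a -> (forall s, P s -> P (s + 1)) -> (forall s, P (s + 1) -> P s) ->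
  forall s, P s.
Proof.
move=> Pa up down s.
have Pup (k : nat) : P (a + k%:Z).
  by elim: k => [|k IHk]; [rewrite addr0 | rewrite -addn1 PoszD addrA; apply: up].
have Pdown (k : nat) : P (a - k%:Z).
  elim: k => [|k IHk]; first by rewrite subr0.
  by apply: down; rewrite -addn1 PoszD opprD addrA subrK.
by rewrite -(subrKC a s); case: (s - a) => k; [exact: Pup | rewrite NegzE; exact: Pdown].
Qed.

Lemma pmulz_eq1l (x y : int) : 0 < x -> x * y = 1 -> x = 1.
Proof.
move=> x_gt0 xy1; have y_gt0 : 0 < y by rewrite -(pmulr_rgt0 _ x_gt0) xy1.
nia.
Qed.

Section CassiniSequence.

Variable h : int -> int.
Hypothesis h_gt0 : forall s, 0 < h s.
Hypothesis h_cassini : forall s, h s * h (s + 2) = h (s + 1) ^+ 2 + 1.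

(* At a local minimum, h (s - 1) * h (s + 1) = h s ^+ 2 + 1 forces a neighbour equal
   to h s, which then divides 1. *)
Lemma cassini_seq_local_min s : h s <= h (s - 1) -> h s <= h (s + 1) ->
  exists s0, h s0 = 1 /\ h (s0 + 1) = 1.
Proof.
move=> le_prev le_next.
have rec : h (s - 1) * h (s + 1) = h s ^+ 2 + 1.
  by have := h_cassini (s - 1); rewrite subrK -addrA.
have [eq_prev|ne_prev] := eqVneq (h (s - 1)) (h s).
  have hs1 : h s = 1 by apply: (@pmulz_eq1l _ (h (s + 1) - h s)); rewrite ?h_gt0 //; nia.
  by exists (s - 1); rewrite subrK eq_prev hs1.
have [eq_next|ne_next] := eqVneq (h (s + 1)) (h s).
  have hs1 : h s = 1 by apply: (@pmulz_eq1l _ (h (s - 1) - h s)); rewrite ?h_gt0 //; nia.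
  by exists s; rewrite eq_next hs1.
have := h_gt0 s; nia.
Qed.

Lemma cassini_seq_unit_pair : exists s0, h s0 = 1 /\ h (s0 + 1) = 1.
Proof.
suff bounded (N : nat) s : h s <= N%:Z -> exists s0, h s0 = 1 /\ h (s0 + 1) = 1.
  by apply: (bounded `|h 0|%N 0); have := h_gt0 0; lia.
elim: N s => [|N IHN] s le_hs; first by have := h_gt0 s; lia.
have [/IHN //|lt_prev] := lerP (h (s - 1)) N%:Z.
have [/IHN //|lt_next] := lerP (h (s + 1)) N%:Z.
by apply: (@cassini_seq_local_min s); lia.
Qed.

Lemma cassini_seq_eq g a :
  (forall s, g s * g (s + 2) = g (s + 1) ^+ 2 + 1) ->
  g a = h a -> g (a + 1) = h (a + 1) -> forall s, g s = h s.
Proof.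
move=> g_cassini ga ga1.
suff agree : forall s, g s = h s /\ g (s + 1) = h (s + 1) by move=> s; case: (agree s).
apply: (@int_ind_around _ a) => // s [eq_s eq_s1]; split => //.
- rewrite -addrA; apply: (mulfI (x := h s)); first by rewrite gt_eqF.
  by rewrite -{1}eq_s g_cassini h_cassini eq_s1.
- apply: (mulIf (x := h (s + 2))); first by rewrite gt_eqF.
  by rewrite h_cassini -eq_s -g_cassini addrA eq_s1.
Qed.

End CassiniSequence.

Section Periods.

Variables (V : zmodType) (T : Type) (f : V -> T).

Lemma periodz d : (forall v, f (v + d) = f v) -> forall x v, f (v + d *~ x) = f v.
Proof.
move=> per x v; move: x; apply: (@int_ind_around _ 0) => [|x IHx|x IHx].
- by rewrite mulr0z addr0.
- by rewrite mulrzDr addrA per.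
- by rewrite -IHx mulrzDr addrA per.
Qed.

Lemma period_sum (I : Type) (d : I -> V) (c : I -> int) (r : seq I) :
  (forall k v, f (v + d k) = f v) -> forall v, f (v + \sum_(k <- r) d k *~ c k) = f v.
Proof.
move=> per; elim: r => [|k r IHr] v; first by rewrite big_nil addr0.
by rewrite big_cons addrA addrAC (periodz (per k)).
Qed.

End Periods.

Definition vsum (n : nat) (i : 'rV[int]_n) : int := \sum_(k < n) i 0 k.

Lemma vsumD n (i j : 'rV[int]_n) : vsum (i + j) = vsum i + vsum j.
Proof. by rewrite /vsum -big_split; apply: eq_bigr => k _; rewrite mxE. Qed.

Lemma vsum_unitvZ n x (k : 'I_n) : vsum (x *: unitv k) = x.
Proof.
rewrite /vsum (bigD1 k) //= big1 => [|j jk]; first by rewrite !mxE !eqxx mulr1 addr0.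
by rewrite !mxE (negbTE jk) andbF mulr0.
Qed.

Lemma vsum_unitv n (k : 'I_n) : vsum (unitv k) = 1.
Proof. by rewrite -[unitv k]scale1r vsum_unitvZ. Qed.

Lemma stair_tilingE n (i : 'rV[int]_n) : stair_tiling i = fstair (vsum i).
Proof. by []. Qed.

Lemma unitv_shift_vsum n T (f : 'rV[int]_n -> T) (o : 'I_n) :
  (forall i k, f (i + unitv k) = f (i + unitv o)) -> forall i, f i = f (vsum i *: unitv o).
Proof.
move=> step i.
have per k v : f (v + (unitv k - unitv o)) = f v.
  by rewrite addrA addrAC step subrK.
have scalez x (v : 'rV[int]_n) : x *: v = v *~ x by rewrite -scaler_int intz.
have decomp : i = vsum i *: unitv o + \sum_(k < n) (unitv k - unitv o) *~ i 0 k.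
  under eq_bigr do rewrite mulrzBl.
  rewrite sumrB -mulrz_sumr scalez addrCA subrr addr0 {1}[i]row_sum_delta.
  by under eq_bigr do rewrite scalez.
by rewrite {1}decomp period_sum.
Qed.

Lemma exists_ord_neq2 n (k l : 'I_n) : (3 <= n)%N -> exists2 m : 'I_n, m != k & m != l.
Proof.
move=> n_ge3; have : (0 < #|~: [set k; l]|)%N.
  by have := cardsC [set k; l]; rewrite card_ord; have := cards2 k l; lia.
by case/card_gt0P => m; rewrite !inE => /norP[mk ml]; exists m.
Qed.

Section AntiSL2Tiling.

Variables (n : nat) (b : 'rV[int]_n -> int).
Hypothesis b_tiling : anti_SL2_tiling b.

Lemma tiling_cassini i k l : k != l ->
  b (i + unitv k + unitv l) * b i = b (i + unitv k) * b (i + unitv l) + 1.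
Proof. by move=> kl; have := b_tiling.2 i k l kl; lia. Qed.

Lemma tiling_unitv_indep i k l : (3 <= n)%N -> b (i + unitv k) = b (i + unitv l).
Proof.
move=> n_ge3; have [<- //|kl] := eqVneq k l.
have [m mk ml] := exists_ord_neq2 k l n_ge3.
have km : k != m by rewrite eq_sym.
have lm : l != m by rewrite eq_sym.
have E1 := tiling_cassini i kl.
have E2 := tiling_cassini i km.
have E3 := tiling_cassini i lm.
have E4 := tiling_cassini (i + unitv k) lm.
have E5 := tiling_cassini (i + unitv l) km.
rewrite [i + unitv l + unitv k]addrAC in E5.
have x_gt0 := b_tiling.1 i.
have p_gt0 := b_tiling.1 (i + unitv k).
have q_gt0 := b_tiling.1 (i + unitv l).
move: E1 E2 E3 E4 E5 x_gt0 p_gt0 q_gt0.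
set x := b i; set p := b (i + unitv k); set q := b (i + unitv l).
set A := b (i + unitv k + unitv l).
set B := b (i + unitv k + unitv m); set C := b (i + unitv l + unitv m).
set D := b (i + unitv k + unitv l + unitv m).
move=> E1 E2 E3 E4 E5 x_gt0 p_gt0 q_gt0.
have AB : A * B = D * p - 1 by lia.
have AC : A * C = D * q - 1 by lia.
(* Eliminating the corners A, B, C, D of the cube leaves an identity in x, p, q alone. *)
have key : x * x * (p - q) = (p * q + 1) * (q - p).
  have -> : x * x * (p - q) = q * (A * x) * (B * x) - p * (A * x) * (C * x).
    have -> : p - q = q * (A * B) - p * (A * C) by rewrite AB AC; ring.
    ring.
  by rewrite E1 E2 E3; ring.
have : (p - q) * (x * x + p * q + 1) = 0 by nia.
by move/eqP; rewrite mulf_eq0 => /orP[/eqP|/eqP]; nia.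
Qed.

End AntiSL2Tiling.

Lemma stair_tiling_anti_SL2 n : anti_SL2_tiling (@stair_tiling n).
Proof.
split=> [i|i k l kl]; first exact: fstair_gt0.
rewrite !stair_tilingE !vsumD !vsum_unitv -addrA.
by rewrite fstair_cassini expr2; ring.
Qed.

Lemma anti_SL2_tiling_stair n (b : 'rV[int]_n -> int) : (3 <= n)%N ->
  anti_SL2_tiling b -> exists t : 'rV[int]_n, forall i, b i = stair_tiling (i + t).
Proof.
move=> n_ge3 b_tiling.
pose o : 'I_n := Ordinal (ltnW (ltnW n_ge3)).
have [o' o'o _] := exists_ord_neq2 o o n_ge3.
pose h s := b (s *: unitv o).
have b_h i : b i = h (vsum i).
  by apply: unitv_shift_vsum => {}i k; apply: tiling_unitv_indep.
have h_gt0 s : 0 < h s by exact: b_tiling.1.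
have h_cassini s : h s * h (s + 2) = h (s + 1) ^+ 2 + 1.
  have := tiling_cassini b_tiling (s *: unitv o) o'o.
  by rewrite !b_h !vsumD !vsum_unitvZ !vsum_unitv -addrA mulrC expr2 => ->.
have [s0 [h_s0 h_s01]] := cassini_seq_unit_pair h_gt0 h_cassini.
exists ((- s0) *: unitv o) => i.
rewrite b_h stair_tilingE vsumD vsum_unitvZ; symmetry; move: (vsum i).
apply: (cassini_seq_eq h_gt0 h_cassini (g := fun s => fstair (s - s0)) (a := s0)) => [s||] /=.
- by rewrite !(addrAC s _ (- s0)) fstair_cassini.
- by rewrite subrr h_s0.
- by rewrite addrAC subrr add0r h_s01.
Qed.

Theorem theorem2p3 (n : nat) (hn : (3 <= n)%N) :
  (exists a : 'rV[int]_n -> int, anti_SL2_tiling a) /\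
  (forall b : 'rV[int]_n -> int, anti_SL2_tiling b ->
     exists t : 'rV[int]_n, forall i, b i = stair_tiling (i + t)) /\
  (forall b : 'rV[int]_n -> int, anti_SL2_tiling b ->
     forall (i : 'rV[int]_n) (k l : 'I_n), k != l ->
       exists s : int, forall x y : int,
         b (i + x *: unitv k + y *: unitv l) = fstair (x + y + s)) /\
  (forall b : 'rV[int]_n -> int, anti_SL2_tiling b ->
     forall i, exists m : nat, b i = (fib (2 * m).+1)%:Z).
Proof.
split; first by exists (@stair_tiling n); exact: stair_tiling_anti_SL2.
split=> [b|]; first exact: anti_SL2_tiling_stair.
split=> b b_tiling; have [t b_stair] := anti_SL2_tiling_stair hn b_tiling.
- move=> i k l _; exists (vsum i + vsum t) => x y.
  by rewrite b_stair stair_tilingE !vsumD !vsum_unitvZ; congr fstair; ring.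
- by move=> i; rewrite b_stair stair_tilingE; exact: fstair_oddfib.
Qed.
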